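(* Let $G$ be a graph on vertex set $\{1,\dots,n\}$ and consider the reliability extension of $\Gamma_{NC_1}$ on $G$ under the fractional attack model on player $x=1$, with baseline reliabilities $p^*_j\in(0,1]$ ($j\ne1$), a fixed reliability $p_1\in[0,1]$ of player $1$, common cost slopes $L,R>0$ and budget $B\ge0$. (i) If $G=K_n$ (complete graph), or $G=S_n$ is the star with center $1$, then the following profile is an optimal attack: order the nodes $2,\dots,n$ as $\sigma(2),\dots,\sigma(n)$ with $p^*_{\sigma(2)}\ge p^*_{\sigma(3)}\ge\dots\ge p^*_{\sigma(n)}$ (ties broken arbitrarily); for $i=2,3,\dots$ in turn, raise $p_{\sigma(i)}$ to $1$ while the remaining budget allows it, and when the remaining budget no longer allows raising $p_{\sigma(i)}$ to $1$, raise it as much as the remaining budget allows; leave all other reliabilities at their baseline values. (ii) If $G=S_n$ is the star with center $2$ (so $1$ is a leaf), then the profile obtained by the same procedure, but using the order $Q$ consisting of node $2$ first, followed by nodes $3,\dots,n$ in decreasing order of baseline reliability (ties broken arbitrarily), is an optimal attack.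
   Context: Game $\Gamma_{NC_1}$ on $G=(V,E)$: $v_{NC_1}(S)=|S\cup\delta(S)|$, where $\delta(S)$ is the set of vertices outside $S$ having a neighbour in $S$. For $T\subseteq S$, $\Pi_{T,S}=\prod_{i\in T}p_i\prod_{i\in S\setminus T}(1-p_i)$; the reliability extension with parameters $p=(p_1,\dots,p_n)$ is $\overline v(S)=\sum_{T\subseteq S}v(T)\Pi_{T,S}$. Shapley value: $Sh[v](x)=\frac1{n!}\sum_\pi[v(S^x_\pi\cup\{x\})-v(S^x_\pi)]$ over permutations $\pi$, $S^x_\pi$ the players preceding $x$. Fractional attack model on target $x$: $p_x$ is fixed; for every $j\ne x$ one may choose any $p_j\in[0,1]$ at cost $u_j(p_j)$, where $u_j(p)=L(p^*_j-p)$ if $p<p^*_j$ and $u_j(p)=R(p-p^*_j)$ if $p\ge p^*_j$. A profile is feasible if $\sum_{j\ne x}u_j(p_j)\le B$; an optimal attack is a feasible profile minimizing $Sh[\overline{v_{NC_1}}](x)$. *)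

From HB Require Import structures.
From mathcomp Require Import all_boot all_order all_algebra.
From mathcomp Require Import fingroup perm.
From mathcomp Require Import reals.
Set Implicit Arguments. Unset Strict Implicit. Unset Printing Implicit Defensive.
Import Order.TTheory GRing.Theory Num.Theory.
Local Open Scope ring_scope.

(* Vertices are 'I_n, i.e. {0,...,n-1}; paper's vertex k is our k-1. *)

Definition complete_graph (n : nat) : rel 'I_n := fun i j => i != j.
Definition star_graph (n : nat) (c : 'I_n) : rel 'I_n :=
  fun i j => (i != j) && ((i == c) || (j == c)).

Definition nbd_out (n : nat) (e : rel 'I_n) (S : {set 'I_n}) : {set 'I_n} :=
  [set j | (j \notin S) && [exists i in S, e i j]].

Definition v_NC1 (n : nat) (e : rel 'I_n) (S : {set 'I_n}) : nat :=
  #|S :|: nbd_out e S|.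

Section Rel.
Variable R : realType.

Definition PiTS (n : nat) (p : 'I_n -> R) (T S : {set 'I_n}) : R :=
  (\prod_(i in T) p i) * \prod_(i in S :\: T) (1 - p i).

Definition rel_ext (n : nat) (v : {set 'I_n} -> nat) (p : 'I_n -> R)
  (S : {set 'I_n}) : R :=
  \sum_(T in powerset S) (v T)%:R * PiTS p T S.

(* players preceding x in the ordering given by pi (pi j = position of j) *)
Definition preceding (n : nat) (pi : {perm 'I_n}) (x : 'I_n) : {set 'I_n} :=
  [set j | pi j < pi x]%N.

Definition shapley (n : nat) (w : {set 'I_n} -> R) (x : 'I_n) : R :=
  (n`!)%:R^-1 *
  \sum_(pi : {perm 'I_n}) (w (preceding pi x :|: [set x]) - w (preceding pi x)).

Definition Sh_NC1 (n : nat) (e : rel 'I_n) (p : 'I_n -> R) (x : 'I_n) : R :=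
  shapley (rel_ext (v_NC1 e) p) x.

Definition cost (L Rs : R) (pstar : R) (q : R) : R :=
  if q < pstar then L * (pstar - q) else Rs * (q - pstar).

Definition feasible (n : nat) (x : 'I_n) (px : R) (pstar : 'I_n -> R)
  (L Rs B : R) (q : 'I_n -> R) : Prop :=
  [/\ q x = px,
      (forall j, j != x -> 0 <= q j <= 1) &
      \sum_(j | j != x) cost L Rs (pstar j) (q j) <= B].

Definition optimal_attack (n : nat) (e : rel 'I_n) (x : 'I_n) (px : R)
  (pstar : 'I_n -> R) (L Rs B : R) (q : 'I_n -> R) : Prop :=
  feasible x px pstar L Rs B q /\
  forall q', feasible x px pstar L Rs B q' -> Sh_NC1 e q x <= Sh_NC1 e q' x.

Fixpoint greedy (n : nat) (pstar : 'I_n -> R) (Rs b : R) (s : seq 'I_n)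
  : 'I_n -> R :=
  match s with
  | [::] => pstar
  | j :: s' =>
    let c := Rs * (1 - pstar j) in
    if c <= b then
      fun k => if k == j then 1 else greedy pstar Rs (b - c) s' k
    else
      fun k => if k == j then pstar j + b / Rs else greedy pstar Rs 0 s' k
  end.

Definition greedy_profile (n : nat) (x : 'I_n) (px : R) (pstar : 'I_n -> R)
  (Rs B : R) (s : seq 'I_n) : 'I_n -> R :=
  fun k => if k == x then px else greedy pstar Rs B s k.

End Rel.

Definition vtx2 (n : nat) : 'I_n.+2 := @Ordinal n.+2 1 isT.

From HB Require Import structures.
From mathcomp Require Import all_boot all_order all_algebra.
From mathcomp Require Import fingroup perm.
From mathcomp Require Import reals.
From mathcomp Require Import ring lra.
Import Order.TTheory GRing.Theory Num.Theory.
Local Open Scope ring_scope.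
Set Implicit Arguments. Unset Strict Implicit. Unset Printing Implicit Defensive.

(* In the reliability extension, the marginal contribution of x to v_NC1 is the
   expected number of vertices of its closed neighbourhood N[x] not yet dominated
   by the players preceding x, whence
     Sh(x) = p_x / n! * sum_pi sum_(y in N[x]) prod_(l <_pi x, l dominates y) (1 - p_l).
   The double sum is nonincreasing and affine in each p_l separately, and
   moving reliability d from k to j changes it by
     d * (W01 - W10 + W11 * (p_k - p_j - d))   with all W >= 0.
   If a graph automorphism fixing x swaps j and k then W01 = W10, so the move does
   not increase Sh(x) as long as p_k - d <= p_j; this holds for a maximal move when
   p*_k <= p*_j. In a star with centre c <> x, moving reliability from a leaf to c
   never increases Sh(x): the term y = x drops by d * W10, while the term y = c
   grows by at most d * W11 <= d * W10.
   With these exchanges, any feasible profile, first clipped from below at p*, is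
   turned without increasing Sh(x) into one where the first vertex of the order has
   been filled from the later ones; raising it to 1 when the budget allows and
   recursing on the remaining vertices and budget yields the greedy profile. *)

Section Update2.
Variables (T : eqType) (V : Type).
Implicit Types (q : T -> V) (j k l : T).

Definition upd2 q j k (a b : V) : T -> V :=
  fun l => if l == j then a else if l == k then b else q l.

Lemma upd2_l q j k a b : upd2 q j k a b j = a.
Proof. by rewrite /upd2 eqxx. Qed.

Lemma upd2_r q j k a b : j != k -> upd2 q j k a b k = b.
Proof. by rewrite /upd2 eqxx eq_sym => /negbTE ->. Qed.

Lemma upd2_other q j k a b l : l != j -> l != k -> upd2 q j k a b l = q l.
Proof. by rewrite /upd2 => /negbTE -> /negbTE ->. Qed.

Lemma upd2_id q j k : upd2 q j k (q j) (q k) =1 q.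
Proof. by move=> l; rewrite /upd2; case: eqP => [->|_] //; case: eqP => [->|]. Qed.

End Update2.

Lemma upd2_tperm (T : finType) (V : Type) (q : T -> V) (j k : T) (a b : V) :
  j != k -> upd2 q j k a b \o tperm j k =1 upd2 q j k b a.
Proof.
move=> jk l /=; rewrite /upd2.
have kj : k != j by rewrite eq_sym.
case: (tpermP j k l) => [->|->|lj lk].
- by rewrite !eqxx (negbTE kj).
- by rewrite !eqxx (negbTE kj).
- by rewrite (introF eqP lj) (introF eqP lk).
Qed.

Section FinsetSums.
Variables (R : comRingType) (I : finType).
Implicit Types (x : I) (S T : {set I}).

Lemma card_setU_diff (A B : {set I}) :
  (#|A :|: B|%:R - #|A|%:R : R) = \sum_(y in B) (y \notin A)%:R.
Proof.
have cardUD : #|A :|: B| = (#|A| + #|B :\: A|)%N.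
  apply/(@addIn #|A :&: B|); rewrite cardsUI addnAC -(cardsID A B).
  by rewrite [B :&: A]setIC addnA.
rewrite cardUD natrD addrAC subrr add0r (big_setID A) /=.
rewrite big1 ?add0r => [|y /setIP[_ ->] //].
by rewrite (eq_bigr (fun=> 1)) ?sumr_const // => y /setDP[_ ->].
Qed.

Lemma sum_powersetU1 x S (F : {set I} -> R) : x \notin S ->
  \sum_(T in powerset (x |: S)) F T = \sum_(T in powerset S) (F T + F (x |: T)).
Proof.
move=> xS; have xNT T : T \subset S -> x \notin T by move=> /subsetP TS; apply: contra xS => /TS.
have PS : powerset S \subset powerset (x |: S) by rewrite powersetS subsetU1.
rewrite (big_setID (powerset S)) (setIidPr PS).
have -> : powerset (x |: S) :\: powerset S = [set x |: T | T in powerset S].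
  apply/setP => T; rewrite !inE; apply/andP/imsetP => [[TS TxS]|[T' /[!powersetE] T'S ->]].
  - exists (T :\ x); first by rewrite powersetE subDset.
    have [xT|xT] := boolP (x \in T); first by rewrite setD1K.
    case/negP: TS; apply/subsetP => i iT; move/subsetP/(_ i iT): TxS; rewrite !inE.
    by case: eqP iT => // ->; rewrite (negbTE xT).
  - split; last by rewrite setUS.
    by apply: contra xS => /subsetP; apply; rewrite setU11.
rewrite big_imset ?big_split // => T1 T2 /[!powersetE] /xNT xT1 /xNT xT2 eqT.
by rewrite -(setU1K xT1) -(setU1K xT2) eqT.
Qed.

Lemma prod_setD2 (A : {set I}) (F : I -> R) j k :
  j != k ->
  \prod_(l in A) F l = (if j \in A then F j else 1) * (if k \in A then F k else 1) *
                       \prod_(l in A :\ j :\ k) F l.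
Proof.
have setD1_id (B : {set I}) l : l \notin B -> B :\ l = B.
  by move=> lB; apply/setDidPl; rewrite disjoint_sym disjoints1.
move=> jk; have kAj : (k \in A :\ j) = (k \in A) by rewrite !inE eq_sym jk.
rewrite -mulrA; case: ifPn => [jA|jNA].
  rewrite (big_setD1 j jA); congr (_ * _).
  case: ifPn => [kA|kNA]; first by rewrite (big_setD1 k) ?kAj.
  by rewrite (setD1_id _ k) ?kAj ?mul1r.
rewrite mul1r (setD1_id _ j jNA).
by case: ifPn => [kA|kNA]; [rewrite (big_setD1 k)|rewrite (setD1_id _ k) ?mul1r].
Qed.

Lemma prodrD_powerset (f g : I -> R) S :
  \sum_(T in powerset S) (\prod_(i in T) f i * \prod_(i in S :\: T) g i) =
  \prod_(i in S) (f i + g i).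
Proof.
pose F i := if i \in S then f i else 0; pose G i := if i \in S then g i else 1.
have -> : \prod_(i in S) (f i + g i) = \prod_i (F i + G i).
  rewrite [RHS](bigID (mem S)) /= [X in _ * X]big1 ?mulr1.
    by apply: eq_bigr => i iS; rewrite /F /G iS.
  by move=> i /negbTE iNS; rewrite /F /G iNS add0r.
rewrite bigA_distr [RHS](bigID (mem (powerset S))) /= [X in _ + X]big1 ?addr0.
  apply: eq_big => // T /[!powersetE] /subsetP TS.
  rewrite [RHS](bigID (mem T)) /=; congr (_ * _).
    by apply: eq_bigr => i iT; rewrite iT /F TS.
  rewrite [LHS]big_mkcond [RHS]big_mkcond; apply: eq_bigr => i _.
  by rewrite !inE /G; case: (i \in T); case: (i \in S).
move=> T /[!powersetE] /subsetPn[i iT iNS].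
by rewrite (bigD1 i) //= iT /F (negbTE iNS) mul0r.
Qed.

End FinsetSums.

Section AvoidSum.
Variables (R : realFieldType) (n : nat) (I : finType) (P : pred I) (A : I -> {set 'I_n}).
Implicit Types q : 'I_n -> R.

Definition avoid_sum q := \sum_(i | P i) \prod_(l in A i) (1 - q l).

Lemma avoid_sum_le q q' : (forall l, q l <= q' l <= 1) -> avoid_sum q' <= avoid_sum q.
Proof.
move=> qq'; apply: ler_sum => i _; apply: ler_prod => l _.
by have /andP[? ?] := qq' l; apply/andP; split; lra.
Qed.

Lemma avoid_sum_perm (h : I -> I) (tau : {perm 'I_n}) q :
  injective h -> (forall i, P (h i) = P i) ->
  (forall i l, (tau l \in A (h i)) = (l \in A i)) ->
  avoid_sum (q \o tau) = avoid_sum q.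
Proof.
move=> h_inj Ph Ah; rewrite /avoid_sum [RHS](reindex_inj h_inj).
apply: eq_big => [i|i _]; first by rewrite Ph.
by rewrite [RHS](reindex_inj (@perm_inj _ tau)); apply: eq_bigl => l; rewrite Ah.
Qed.

Definition avoid_part (j k : 'I_n) (u v : bool) q :=
  \sum_(i | P i) (if ((j \in A i) == u) && ((k \in A i) == v)
                  then \prod_(l in A i :\ j :\ k) (1 - q l) else 0).

Lemma avoid_part_ge0 j k u v q : (forall l, q l <= 1) -> 0 <= avoid_part j k u v q.
Proof.
move=> q_le1; apply: sumr_ge0 => i _; case: ifP => // _.
by apply: prodr_ge0 => l _; rewrite subr_ge0.
Qed.

Lemma avoid_sum_upd2 j k q a b : j != k ->
  avoid_sum (upd2 q j k a b) =
  avoid_part j k false false q + (1 - a) * avoid_part j k true false q +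
  (1 - b) * avoid_part j k false true q + (1 - a) * (1 - b) * avoid_part j k true true q.
Proof.
move=> jk; rewrite /avoid_part !mulr_sumr -!big_split; apply: eq_bigr => i _ /=.
rewrite (prod_setD2 _ _ jk) upd2_l upd2_r //.
under eq_bigr => l /[!inE] /andP[lk /andP[lj _]] do rewrite upd2_other //.
by case: (j \in A i); case: (k \in A i); rewrite /= ?mulr0 ?addr0 ?add0r ?mul1r ?mulr1.
Qed.

Lemma avoid_sum_transfer j k q a b d : j != k ->
  avoid_sum (upd2 q j k (a + d) (b - d)) - avoid_sum (upd2 q j k a b) =
  d * (avoid_part j k false true q - avoid_part j k true false q +
       avoid_part j k true true q * (b - a - d)).
Proof. by move=> jk; rewrite !avoid_sum_upd2 //; ring. Qed.

Lemma avoid_part_swap j k q : j != k ->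
  avoid_sum (upd2 q j k 1 0) = avoid_sum (upd2 q j k 0 1) ->
  avoid_part j k false true q = avoid_part j k true false q.
Proof. by move=> jk; rewrite !avoid_sum_upd2 // !subrr !subr0 !mul0r !mul1r !addr0; lra. Qed.

Lemma avoid_part_notin j k u q : (forall i, P i -> k \notin A i) ->
  avoid_part j k u true q = 0.
Proof. by move=> kA; apply: big1 => i /kA /negbTE ->; rewrite andbF. Qed.

Lemma avoid_sum_transfer_sym j k q a b d :
  j != k -> (forall l, q l <= 1) ->
  avoid_sum (upd2 q j k 1 0) = avoid_sum (upd2 q j k 0 1) ->
  0 <= d -> b <= a + d ->
  avoid_sum (upd2 q j k (a + d) (b - d)) <= avoid_sum (upd2 q j k a b).
Proof.
move=> jk q_le1 sym d_ge0 ba; rewrite -subr_le0 avoid_sum_transfer // avoid_part_swap //.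
rewrite subrr add0r; apply: mulr_ge0_le0 => //.
by apply: mulr_ge0_le0; [exact: avoid_part_ge0|lra].
Qed.

End AvoidSum.

Section ReliabilityExtension.
Variables (R : realType) (n : nat).
Implicit Types (S T : {set 'I_n}) (p : 'I_n -> R).

Lemma PiTS_U1r p x S T : x \notin S -> T \subset S ->
  PiTS p T (x |: S) = (1 - p x) * PiTS p T S.
Proof.
move=> xS /subsetP TS; have xT : x \notin T by apply: contra xS => /TS.
rewrite /PiTS; have -> : (x |: S) :\: T = x |: (S :\: T).
  by apply/setP => i; rewrite !inE; case: (eqVneq i x) => // ->; rewrite (negbTE xT).
by rewrite big_setU1 ?inE ?(negbTE xS) ?andbF //= mulrCA.
Qed.

Lemma PiTS_U1 p x S T : x \notin S -> T \subset S ->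
  PiTS p (x |: T) (x |: S) = p x * PiTS p T S.
Proof.
move=> xS /subsetP TS; have xT : x \notin T by apply: contra xS => /TS.
rewrite /PiTS; have -> : (x |: S) :\: (x |: T) = S :\: T.
  apply/setP => i; rewrite !inE; case: (eqVneq i x) => [->|_] /=; last by rewrite andbC.
  by rewrite (negbTE xS) andbF.
by rewrite big_setU1 //= mulrA.
Qed.

Lemma rel_ext_marginal (v : {set 'I_n} -> nat) p S x : x \notin S ->
  rel_ext v p (S :|: [set x]) - rel_ext v p S =
  p x * \sum_(T in powerset S) ((v (T :|: [set x]))%:R - (v T)%:R) * PiTS p T S.
Proof.
move=> xS; rewrite /rel_ext setUC sum_powersetU1 // -sumrB mulr_sumr.
apply: eq_bigr => T /[!powersetE] TS.
by rewrite PiTS_U1r // PiTS_U1 // [T :|: _]setUC; ring.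
Qed.

End ReliabilityExtension.

Section Coverage.
Variables (R : realType) (n : nat) (e : rel 'I_n).
Implicit Types (S T : {set 'I_n}) (p : 'I_n -> R).

Definition cnbhd T := [set j | [exists i in T, (i == j) || e i j]].
Definition dominators (y : 'I_n) := [set i | (i == y) || e i y].

Lemma v_NC1E T : v_NC1 e T = #|cnbhd T|.
Proof.
apply: eq_card => j; rewrite !inE; case jT: (j \in T) => /=.
  by apply/esym/existsP; exists j; rewrite jT eqxx.
apply/existsP/existsP => [[i /andP [iT eij]]|[i /andP [iT /orP [/eqP ij|eij]]]].
- by exists i; rewrite iT eij orbT.
- by rewrite -ij iT in jT.
- by exists i; rewrite iT.
Qed.

Lemma in_cnbhd1 x y : (y \in cnbhd [set x]) = (x == y) || e x y.
Proof.
rewrite inE; apply/existsP/idP => [[i /andP[/set1P -> //]]|xy].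
by exists x; rewrite inE eqxx.
Qed.

Lemma cnbhdU A B : cnbhd (A :|: B) = cnbhd A :|: cnbhd B.
Proof.
apply/setP => j; rewrite !inE; apply/existsP/orP => [[i]|[]/existsP[i]].
- by rewrite inE => /andP[/orP[] iAB ?]; [left|right]; apply/existsP; exists i; rewrite iAB.
- by move=> /andP[iA ?]; exists i; rewrite inE iA.
- by move=> /andP[iB ?]; exists i; rewrite inE iB orbT.
Qed.

Lemma notin_cnbhd T y :
  ((y \notin cnbhd T)%:R : R) = \prod_(i in T) (i \notin dominators y)%:R.
Proof.
have [/[1!inE]/existsP[i /andP[iT iy]]|yNT] /= := boolP (y \in cnbhd T).
  by rewrite (bigD1 i) //= inE iy mul0r.
rewrite big1 // => i iT; apply/eqP; rewrite pnatr_eq1 eqb1; apply: contra yNT.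
by rewrite !inE => iy; apply/existsP; exists i; rewrite iT.
Qed.

Lemma v_NC1_marginal T x :
  ((v_NC1 e (T :|: [set x]))%:R - (v_NC1 e T)%:R : R) =
  \sum_(y in cnbhd [set x]) (y \notin cnbhd T)%:R.
Proof. by rewrite !v_NC1E cnbhdU card_setU_diff. Qed.

Lemma sum_uncovered p S y :
  \sum_(T in powerset S) (y \notin cnbhd T)%:R * PiTS p T S =
  \prod_(l in S :&: dominators y) (1 - p l).
Proof.
rewrite (eq_bigr (fun T => \prod_(i in T) ((i \notin dominators y)%:R * p i) *
                          \prod_(i in S :\: T) (1 - p i))); last first.
  by move=> T _; rewrite notin_cnbhd /PiTS mulrA -big_split.
rewrite prodrD_powerset [RHS]big_mkcond [LHS]big_mkcond; apply: eq_bigr => i _.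
by rewrite !inE; case: (i \in S) => //; case: ((i == y) || e i y) => /=; lra.
Qed.

Definition psi x p :=
  avoid_sum (fun i : {perm 'I_n} * 'I_n => i.2 \in cnbhd [set x])
            (fun i => preceding i.1 x :&: dominators i.2) p.

Lemma psiE x p : psi x p = \sum_(pi : {perm 'I_n}) \sum_(y in cnbhd [set x])
                             \prod_(l in preceding pi x :&: dominators y) (1 - p l).
Proof. by rewrite pair_big. Qed.

Lemma Sh_NC1E p x : Sh_NC1 e p x = (n`!)%:R^-1 * p x * psi x p.
Proof.
rewrite /Sh_NC1 /shapley psiE -mulrA; congr (_ * _).
rewrite mulr_sumr; apply: eq_bigr => pi _.
rewrite rel_ext_marginal ?inE ?ltnn //; congr (_ * _).
under eq_bigr do rewrite v_NC1_marginal mulr_suml.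
by rewrite exchange_big; apply: eq_bigr => y _; rewrite sum_uncovered.
Qed.

Lemma psi_perm x (tau : {perm 'I_n}) p :
  tau x = x -> (forall a b, e (tau a) (tau b) = e a b) ->
  psi x (p \o tau) = psi x p.
Proof.
move=> tx tauE; have tau_eq a b : (tau a == tau b) = (a == b) by rewrite (inj_eq perm_inj).
apply: (@avoid_sum_perm _ _ _ _ _ (fun i => ((tau^-1 * i.1)%g, tau i.2))).
- by move=> [pi y] [pi' y'] [/mulgI -> /perm_inj ->].
- by move=> [pi y]; rewrite /= !in_cnbhd1 -{1 2}tx tau_eq tauE.
- move=> [pi y] l; rewrite /= !inE !permM permK tau_eq tauE.
  by rewrite -{1}tx permK.
Qed.

End Coverage.

Section GreedyOptimality.
Variables (R : realType) (n : nat) (x : 'I_n) (p1 : R) (pstar : 'I_n -> R) (Rs : R).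
Variable Phi : ('I_n -> R) -> R.
Hypothesis p1_range : 0 <= p1 <= 1.
Hypothesis pstar_range : forall l, l != x -> 0 <= pstar l <= 1.
Hypothesis Rs_gt0 : 0 < Rs.
Implicit Types (q : 'I_n -> R) (s : seq 'I_n) (j k l : 'I_n).

Definition admissible q := q x = p1 /\ forall l, 0 <= q l <= 1.

Hypothesis Phi_mono : forall q q', admissible q -> admissible q' ->
  (forall l, q l <= q' l) -> Phi q' <= Phi q.

Definition above_pstar s q := {in s, forall l, pstar l <= q l}.

Definition excess s q := \sum_(l <- s) (q l - pstar l).

Definition patch q s (g : 'I_n -> R) l := if l \in s then g l else q l.

Definition transfer_amount q j k := Num.min (1 - q j) (q k - pstar k).

Definition transfer q j k :=
  upd2 q j k (q j + transfer_amount q j k) (q k - transfer_amount q j k).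

Definition exchangeable j k := forall q, admissible q ->
  pstar j <= q j -> pstar k <= q k -> Phi (transfer q j k) <= Phi q.

Fixpoint exchange_ordered s : Prop :=
  if s is j :: s' then {in s', forall k, exchangeable j k} /\ exchange_ordered s'
  else True.

Lemma exchange_ordered_sorted s : uniq s -> sorted (fun a b => pstar b <= pstar a) s ->
  {in s &, forall j k, j != k -> pstar k <= pstar j -> exchangeable j k} ->
  exchange_ordered s.
Proof.
have tr : transitive (fun a b => pstar b <= pstar a) by move=> a b c ab bc; apply: le_trans bc ab.
elim: s => // j s IH; rewrite cons_uniq !sorted_pairwise // pairwise_cons.
move=> /andP[js us] /andP[/allP pj ps] ex; split.
  move=> k ks; apply: ex; rewrite ?inE ?eqxx ?ks ?orbT ?pj //.
  by apply: contraNneq js => ->.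
apply: IH; rewrite ?sorted_pairwise // => a b a_s b_s.
by apply: ex; rewrite inE ?a_s ?b_s orbT.
Qed.

Lemma transfer_amount_range q j k : q j <= 1 -> pstar k <= q k ->
  [/\ 0 <= transfer_amount q j k, transfer_amount q j k <= 1 - q j
    & transfer_amount q j k <= q k - pstar k].
Proof.
move=> qj1 pk; rewrite /transfer_amount le_min !ge_min !lexx orbT.
by split=> //; rewrite !subr_ge0 qj1.
Qed.

Lemma transfer_amountE q j k :
  transfer_amount q j k = 1 - q j \/ transfer_amount q j k = q k - pstar k.
Proof. by rewrite /transfer_amount minEle; case: ifP; [left|right]. Qed.

Lemma transfer_other q j k l : l != j -> l != k -> transfer q j k l = q l.
Proof. exact: upd2_other. Qed.

Lemma transfer_ge q j k l : q j <= 1 -> pstar k <= q k ->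
  pstar l <= q l -> pstar l <= transfer q j k l.
Proof.
move=> qj1 pk pl; have [d0 _ dk] := transfer_amount_range qj1 pk.
rewrite /transfer /upd2; case: (eqVneq l j) pl => [->|_] pl; first lra.
by case: (eqVneq l k) => [->|_] //; lra.
Qed.

Lemma transfer_admissible q j k : j != k -> j != x -> k != x ->
  admissible q -> pstar k <= q k -> admissible (transfer q j k).
Proof.
move=> jk jx kx [qx q01] pk; have /andP[qj0 qj1] := q01 j.
have [d0 dj dk] := transfer_amount_range qj1 pk.
have /andP[pk0 _] := pstar_range kx; split; first by rewrite transfer_other 1?eq_sym.
move=> l; rewrite /transfer /upd2; case: (eqVneq l j) => _; first by apply/andP; split; lra.
case: (eqVneq l k) => _ //; have /andP[? ?] := q01 k; apply/andP; split; lra.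
Qed.

Lemma transfer_sum q j k : j != k -> transfer q j k j + transfer q j k k = q j + q k.
Proof. by move=> jk; rewrite /transfer upd2_l upd2_r //; ring. Qed.

Fixpoint fill q j s := if s is k :: s' then fill (transfer q j k) j s' else q.

Lemma pstar_range_in s : x \notin s -> {in s, forall l, 0 <= pstar l <= 1}.
Proof. by move=> xs l ls; apply: pstar_range; apply: contraNneq xs => <-. Qed.

Section Fill.
Variable j : 'I_n.
Hypothesis jx : j != x.

Lemma fill_other q s l : l \notin j :: s -> fill q j s l = q l.
Proof.
elim: s q => //= k s IH q; rewrite !inE !negb_or => /and3P[lj lk ls].
by rewrite IH ?inE ?negb_or ?lj // transfer_other.
Qed.

Lemma transfer_inv q k s : uniq [:: j, k & s] -> x \notin k :: s ->
  admissible q -> above_pstar [:: j, k & s] q ->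
  admissible (transfer q j k) /\ above_pstar [:: j, k & s] (transfer q j k).
Proof.
rewrite /= !inE !negb_or => /andP[/andP[jk _] _] /andP[xk _] qa qp.
have qj1 : q j <= 1 by case: qa => _ /(_ j) /andP[].
have pk : pstar k <= q k by apply: qp; rewrite !inE eqxx orbT.
split; first by apply: transfer_admissible; rewrite // eq_sym.
by move=> l ls; apply: transfer_ge => //; apply: qp.
Qed.

Lemma above_pstar_behead q k s :
  above_pstar [:: j, k & s] q -> above_pstar (j :: s) q.
Proof. by move=> qp l; rewrite !inE => /orP[] ls; apply: qp; rewrite !inE ls ?orbT. Qed.

Lemma fill_inv q s : uniq (j :: s) -> x \notin s -> admissible q -> above_pstar (j :: s) q ->
  admissible (fill q j s) /\ above_pstar (j :: s) (fill q j s).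
Proof.
elim: s q => //= k s IH q us xs qa qp; have [ta tp] := transfer_inv us xs qa qp.
move: us xs; rewrite /= !inE !negb_or => /andP[/andP[jk js] /andP[ks us]] /andP[_ xs].
have [fa fp] := IH _ (introT andP (conj js us)) xs ta (above_pstar_behead tp).
split=> // l /[!inE] /or3P[/eqP->|/eqP->|ls].
- by apply: fp; rewrite inE eqxx.
- by rewrite fill_other ?inE ?negb_or 1?eq_sym ?jk //; apply: tp; rewrite !inE eqxx orbT.
- by apply: fp; rewrite inE ls orbT.
Qed.

Lemma fill_ge q s : uniq (j :: s) -> x \notin s -> admissible q -> above_pstar (j :: s) q ->
  q j <= fill q j s j.
Proof.
elim: s q => //= k s IH q us xs qa qp; have [ta tp] := transfer_inv us xs qa qp.
move: us xs; rewrite /= !inE !negb_or => /andP[/andP[jk js] /andP[ks us]] /andP[_ xs].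
apply: le_trans (IH _ _ xs ta (above_pstar_behead tp)); last by rewrite /= js.
have pk : pstar k <= q k by apply: qp; rewrite !inE eqxx orbT.
have [d0 _ _] := transfer_amount_range (proj2 (andP (proj2 qa j))) pk.
by rewrite /transfer upd2_l lerDl.
Qed.

Lemma fill_sum q s : uniq (j :: s) ->
  fill q j s j + \sum_(l <- s) fill q j s l = q j + \sum_(l <- s) q l.
Proof.
elim: s q => [|k s IH] q; first by rewrite !big_nil.
rewrite /= !inE !negb_or => /andP[/andP[jk js] /andP[ks us]].
rewrite !big_cons addrCA IH /= ?js // fill_other ?inE ?negb_or 1?eq_sym ?jk //.
rewrite addrCA !addrA transfer_sum //; congr (_ + _).
rewrite (eq_big_seq q) // => l ls; rewrite transfer_other //.
  by apply: contraNneq js => <-.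
by apply: contraNneq ks => <-.
Qed.

Lemma fill_saturated q s : uniq (j :: s) -> x \notin s -> admissible q ->
  above_pstar (j :: s) q -> fill q j s j = 1 \/ {in s, forall l, fill q j s l = pstar l}.
Proof.
elim: s q => [|k s IH] q us xs qa qp; first by right.
have [ta tp] := transfer_inv us xs qa qp.
move: us xs; rewrite /= !inE !negb_or => /andP[/andP[jk js] /andP[ks us]] /andP[_ xs].
have us' : uniq (j :: s) by rewrite /= js.
have tp' := above_pstar_behead tp.
have [->|drained] := IH _ us' xs ta tp'; first by left.
have fk : fill (transfer q j k) j s k = q k - transfer_amount q j k.
  by rewrite fill_other ?inE ?negb_or 1?eq_sym ?jk // /transfer upd2_r.
case: (transfer_amountE q j k) => d_eq; [left|right].
- have [fa _] := fill_inv us' xs ta tp'; apply/eqP; rewrite eq_le.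
  have -> /= : fill (transfer q j k) j s j <= 1 by case: fa => _ /(_ j) /andP[].
  by apply: le_trans (fill_ge us' xs ta tp'); rewrite /transfer upd2_l d_eq addrC subrK.
- by move=> l /[!inE] /orP[/eqP->|/drained //]; rewrite fk d_eq opprB addrC subrK.
Qed.

Lemma fill_Phi q s : uniq (j :: s) -> x \notin s -> admissible q ->
  above_pstar (j :: s) q -> {in s, forall k, exchangeable j k} ->
  Phi (fill q j s) <= Phi q.
Proof.
elim: s q => //= k s IH q us xs qa qp exj; have [ta tp] := transfer_inv us xs qa qp.
move: us xs; rewrite /= !inE !negb_or => /andP[/andP[jk js] /andP[ks us]] /andP[_ xs].
apply: le_trans (IH _ _ xs ta (above_pstar_behead tp) _) _.
- by rewrite /= js.
- by move=> l ls; apply: exj; rewrite inE ls orbT.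
by apply: exj => //; [rewrite inE eqxx|apply: qp; rewrite !inE eqxx ?orbT..].
Qed.

Lemma fill_excess q s : uniq (j :: s) ->
  excess (j :: s) (fill q j s) = excess (j :: s) q.
Proof. by move=> us; rewrite /excess !big_cons !sumrB; have := fill_sum q us; lra. Qed.

Lemma excess_ge0 q s : above_pstar s q -> 0 <= excess s q.
Proof. by move=> qp; rewrite /excess big_seq sumr_ge0 // => l /qp; rewrite subr_ge0. Qed.

Lemma fill_budget_full q s b : uniq (j :: s) -> x \notin s -> admissible q ->
  above_pstar (j :: s) q -> Rs * excess (j :: s) q <= b -> Rs * (1 - pstar j) <= b ->
  Rs * excess s (fill q j s) <= b - Rs * (1 - pstar j).
Proof.
move=> us xs qa qp budget full; have [fj|drained] := fill_saturated us xs qa qp.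
  have := fill_excess q us; rewrite /excess big_cons fj => E.
  by move: budget; rewrite /excess -E mulrDr; lra.
by rewrite /excess big_seq big1 ?mulr0 ?subr_ge0 // => l /drained ->; rewrite subrr.
Qed.

Lemma fill_budget_partial q s b : uniq (j :: s) -> x \notin s -> admissible q ->
  above_pstar (j :: s) q -> Rs * excess (j :: s) q <= b -> b < Rs * (1 - pstar j) ->
  fill q j s j <= pstar j + b / Rs /\ {in s, forall l, fill q j s l = pstar l}.
Proof.
move=> us xs qa qp budget partial; have [_ fp] := fill_inv us xs qa qp.
have := fill_excess q us; rewrite {1}/excess big_cons -/(excess s _) => E.
have rest_ge0 : 0 <= excess s (fill q j s).
  by apply: excess_ge0 => l ls; apply: fp; rewrite inE ls orbT.
have E_le : excess (j :: s) q <= b / Rs by rewrite ler_pdivlMr // mulrC.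
have [fj|drained] := fill_saturated us xs qa qp.
  have : Rs * (1 - pstar j) <= Rs * excess (j :: s) q by rewrite ler_pM2l // -E fj lerDl.
  by lra.
by split=> //; lra.
Qed.
End Fill.

Lemma greedy0 s : {in s, forall l, pstar l <= 1} -> greedy pstar Rs 0 s =1 pstar.
Proof.
elim: s => //= j s IH ps l; have ps' : {in s, forall l, pstar l <= 1}.
  by move=> l' ls; apply: ps; rewrite inE ls orbT.
have pj1 : pstar j <= 1 by apply: ps; rewrite inE eqxx.
case: ifP => [cost0|_]; last by case: (eqVneq l j) => [->|_]; rewrite ?mul0r ?addr0 ?IH.
have pj : pstar j = 1 by move: cost0; rewrite pmulr_rle0 // subr_le0 => p1j; apply/le_anti/andP.
by case: (eqVneq l j) => [->|_] //; rewrite pj subrr mulr0 subrr IH.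
Qed.

Lemma greedy_range s b : {in s, forall l, 0 <= pstar l <= 1} -> 0 <= b ->
  {in s, forall l, pstar l <= greedy pstar Rs b s l <= 1}.
Proof.
elim: s b => //= j s IH b ps b0 l; have ps' : {in s, forall l, 0 <= pstar l <= 1}.
  by move=> l' ls; apply: ps; rewrite inE ls orbT.
have /andP[pj0 pj1] : 0 <= pstar j <= 1 by apply: ps; rewrite inE eqxx.
rewrite inE; case: ifPn => [full|partial]; case: (eqVneq l j) => [->|lj] //= ls.
- by rewrite pj1 lexx.
- by apply: IH; rewrite ?subr_ge0.
- have : b / Rs < 1 - pstar j by rewrite ltr_pdivrMr // mulrC ltNge.
  have : 0 <= b / Rs by rewrite divr_ge0 // ltW.
  by move=> *; apply/andP; split; lra.
- by rewrite greedy0 ?lexx; [case/andP: (ps' l ls)|move=> l' /ps' /andP[]].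
Qed.

Lemma greedy_excess s b : uniq s -> {in s, forall l, 0 <= pstar l <= 1} -> 0 <= b ->
  Rs * excess s (greedy pstar Rs b s) <= b.
Proof.
elim: s b => [|j s IH] b; first by rewrite /excess big_nil mulr0.
move=> /= /andP[js us] ps b0; have ps' : {in s, forall l, 0 <= pstar l <= 1}.
  by move=> l ls; apply: ps; rewrite inE ls orbT.
have off_j l : l \in s -> (l == j) = false by move=> ls; apply: contraNF js => /eqP <-.
rewrite /excess big_cons /=; case: ifPn => [full|partial]; rewrite eqxx.
  rewrite (eq_big_seq (fun l => greedy pstar Rs (b - Rs * (1 - pstar j)) s l - pstar l)).
    have := IH (b - Rs * (1 - pstar j)) us ps'; rewrite subr_ge0 => /(_ full).
    by rewrite /excess mulrDr; lra.
  by move=> l /off_j ->.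
rewrite big_seq big1 => [|l ls]; last first.
  by rewrite off_j // greedy0 ?subrr // => l' /ps' /andP[].
by rewrite addr0 addrAC subrr add0r mulrC divfK ?gt_eqF.
Qed.

Lemma greedy_partial_le q j s b : uniq (j :: s) -> x \notin j :: s ->
  {in s, forall k, exchangeable j k} -> 0 <= b -> admissible q -> above_pstar (j :: s) q ->
  Rs * excess (j :: s) q <= b -> b < Rs * (1 - pstar j) ->
  Phi (patch q (j :: s) (greedy pstar Rs b (j :: s))) <= Phi q.
Proof.
move=> us xjs exj b0 qa qp budget partial; move: (xjs); rewrite inE negb_or => /andP[xj xs].
have jx : j != x by rewrite eq_sym.
have [fj drained] := fill_budget_partial jx us xs qa qp budget partial.
have [fa _] := fill_inv jx us xs qa qp.
have /andP[pj0 pj1] := pstar_range jx.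
have ps := pstar_range_in xs.
have gE l : patch q (j :: s) (greedy pstar Rs b (j :: s)) l =
            if l == j then pstar j + b / Rs else if l \in s then pstar l else q l.
  rewrite /patch /= inE ltNge in partial *; rewrite (negbTE partial).
  by case: (eqVneq l j) => //= _; case: ifP => // _; rewrite greedy0 // => l' /ps /andP[].
apply: le_trans (fill_Phi jx us xs qa qp exj); apply: Phi_mono => //.
- split=> [|l]; first by rewrite gE eq_sym (negbTE jx) (negbTE xs); case: qa.
  rewrite gE; case: (eqVneq l j) => _; last by case: ifPn => [/ps|_]; [|case: qa].
  have : b / Rs < 1 - pstar j by rewrite ltr_pdivrMr // mulrC.
  have : 0 <= b / Rs by rewrite divr_ge0 // ltW.
  by move=> *; apply/andP; split; lra.
- move=> l; rewrite gE; case: (eqVneq l j) => [->|lj] //.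
  by case: ifPn => [/drained ->|ls] //; rewrite fill_other // inE negb_or lj.
Qed.

Lemma greedy_le s b q : uniq s -> x \notin s -> exchange_ordered s -> 0 <= b ->
  admissible q -> above_pstar s q -> Rs * excess s q <= b ->
  Phi (patch q s (greedy pstar Rs b s)) <= Phi q.
Proof.
elim: s b q => [|j s IH] b q; first by move=> *; exact: lexx.
move=> us xjs [exj exs] b0 qa qp budget; have [full|partial] := leP (Rs * (1 - pstar j)) b;
  last exact: greedy_partial_le.
move: (us) (xjs); rewrite /= inE negb_or => /andP[js us'] /andP[xj xs].
have jx : j != x by rewrite eq_sym.
have [[fx f01] fp] := fill_inv jx us xs qa qp.
pose q1 l := if l == j then 1 else fill q j s l.
have q1a : admissible q1.
  split=> [|l]; rewrite /q1; first by rewrite eq_sym (negbTE jx).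
  by case: (eqVneq l j) => _ /=; [apply/andP; split; lra|exact: f01].
have off_j l : l \in s -> (l == j) = false by move=> ls; apply: contraNF js => /eqP <-.
have q1_fill : excess s q1 = excess s (fill q j s).
  by apply: eq_big_seq => l /off_j; rewrite /q1 => ->.
have -> : patch q (j :: s) (greedy pstar Rs b (j :: s)) =
          patch q1 s (greedy pstar Rs (b - Rs * (1 - pstar j)) s).
  apply: boolp.funext => l; rewrite /patch /q1 /= full inE.
  case: (eqVneq l j) => [->|lj] /=; first by rewrite (negbTE js).
  by case: ifP => // ls; rewrite fill_other // inE negb_or lj ls.
apply: le_trans (IH _ _ us' xs exs _ q1a _ _) _.
- by rewrite subr_ge0.
- by move=> l ls; rewrite /q1 off_j //; apply: fp; rewrite inE ls orbT.
- by rewrite q1_fill; exact: fill_budget_full.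
apply: le_trans (fill_Phi jx us xs qa qp exj).
apply: Phi_mono => // l.
by rewrite /q1; case: (eqVneq l j) => [->|_] /=; [case/andP: (f01 j)|].
Qed.

Lemma cost_above (L p q : R) : p <= q -> cost L Rs p q = Rs * (q - p).
Proof. by rewrite /cost ltNge => ->. Qed.

Lemma cost_ge_clip (L p q : R) : 0 < L -> Rs * (Num.max q p - p) <= cost L Rs p q.
Proof.
rewrite /cost; case: (ltP q p) => [qp|//] L0.
by rewrite subrr mulr0; apply: mulr_ge0; lra.
Qed.

Section Profile.
Variables (L B : R) (s : seq 'I_n).
Hypothesis s_perm : perm_eq s [seq j <- enum 'I_n | j != x].
Hypothesis B_ge0 : 0 <= B.

Lemma mem_profile_seq l : (l \in s) = (l != x).
Proof. by rewrite (perm_mem s_perm) mem_filter mem_enum andbT. Qed.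

Lemma uniq_profile_seq : uniq s.
Proof. by rewrite (perm_uniq s_perm) filter_uniq // enum_uniq. Qed.

Lemma big_profile_seq (F : 'I_n -> R) : \sum_(l <- s) F l = \sum_(l | l != x) F l.
Proof. by rewrite (perm_big _ s_perm) big_filter -(big_enum_cond _ _ predT). Qed.

Lemma patch_greedy_profile q : q x = p1 ->
  patch q s (greedy pstar Rs B s) = greedy_profile x p1 pstar Rs B s.
Proof.
move=> qx; apply: boolp.funext => l; rewrite /patch /greedy_profile mem_profile_seq.
by case: (eqVneq l x) => [->|].
Qed.

Lemma greedy_profile_feasible : feasible x p1 pstar L Rs B (greedy_profile x p1 pstar Rs B s).
Proof.
have xs : x \notin s by rewrite mem_profile_seq eqxx.
have g_range := greedy_range (pstar_range_in xs) B_ge0.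
split; first by rewrite /greedy_profile eqxx.
  move=> j jx; rewrite /greedy_profile (negbTE jx).
  have js : j \in s by rewrite mem_profile_seq.
  have /andP[pj gj] := g_range j js.
  by have /andP[? _] := pstar_range jx; apply/andP; split=> //; lra.
rewrite -big_profile_seq (eq_big_seq (fun l => Rs * (greedy pstar Rs B s l - pstar l))).
  by rewrite -mulr_sumr; exact: greedy_excess uniq_profile_seq (pstar_range_in xs) B_ge0.
move=> l ls; have lx : l != x by rewrite -mem_profile_seq.
by rewrite /greedy_profile (negbTE lx) cost_above //; case/andP: (g_range l ls).
Qed.

Lemma greedy_profile_optimal q : 0 < L -> exchange_ordered s ->
  feasible x p1 pstar L Rs B q -> Phi (greedy_profile x p1 pstar Rs B s) <= Phi q.
Proof.
move=> L0 exs [qx q01 qcost]; have xs : x \notin s by rewrite mem_profile_seq eqxx.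
have qa : admissible q by split=> // l; case: (eqVneq l x) => [->|/q01 //]; rewrite qx.
pose qt := patch q s (fun l => Num.max (q l) (pstar l)).
have q_qt l : q l <= qt l by rewrite /qt /patch; case: ifP; rewrite ?le_max ?lexx.
have qta : admissible qt.
  split=> [|l]; first by rewrite /qt /patch (negbTE xs).
  rewrite /qt /patch mem_profile_seq; case: ifPn => [lx|_]; last by case: qa.
  by rewrite ge_max le_max; case/andP: (q01 l lx) => -> ->; case/andP: (pstar_range lx) => -> ->.
rewrite -(patch_greedy_profile (q := qt)); last by case: qta.
apply: le_trans (greedy_le uniq_profile_seq xs exs B_ge0 qta _ _) (Phi_mono qa qta q_qt).
  by move=> l ls; rewrite /qt /patch ls le_max lexx orbT.
apply: le_trans qcost; rewrite /excess mulr_sumr -big_profile_seq.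
by rewrite big_seq [X in _ <= X]big_seq; apply: ler_sum => l ls; rewrite /qt /patch ls cost_ge_clip.
Qed.

End Profile.

End GreedyOptimality.

Section ShapleyExchange.
Variables (R : realType) (n : nat) (e : rel 'I_n) (x : 'I_n) (p1 : R) (pstar : 'I_n -> R).
Implicit Types (q : 'I_n -> R) (j k : 'I_n).

Let Sh q := Sh_NC1 e q x.

Lemma Sh_NC1_mono q q' : admissible x p1 q -> admissible x p1 q' ->
  (forall l, q l <= q' l) -> Sh q' <= Sh q.
Proof.
move=> [qx q01] [q'x q'01] qq'; rewrite /Sh !Sh_NC1E qx q'x.
have /andP[p1_ge0 _] : 0 <= p1 <= 1 by rewrite -qx.
apply: ler_wpM2l; first by rewrite mulr_ge0 // invr_ge0.
by apply: avoid_sum_le => l; rewrite qq'; case/andP: (q'01 l).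
Qed.

Lemma exchangeable_psi j k : j != x -> k != x ->
  (forall q, admissible x p1 q -> pstar j <= q j -> pstar k <= q k ->
     psi e x (transfer pstar q j k) <= psi e x q) ->
  exchangeable x p1 pstar Sh j k.
Proof.
move=> jx kx psi_le q qa pj pk; have [qx q01] := qa.
have /andP[p1_ge0 _] : 0 <= p1 <= 1 by rewrite -qx.
rewrite /Sh !Sh_NC1E /transfer upd2_other 1?eq_sym // qx.
by apply: ler_wpM2l; [rewrite mulr_ge0 // invr_ge0|exact: psi_le].
Qed.

Lemma Sh_NC1_exchangeable_sym j k : j != k -> j != x -> k != x -> pstar k <= pstar j ->
  (forall a b, e (tperm j k a) (tperm j k b) = e a b) -> exchangeable x p1 pstar Sh j k.
Proof.
move=> jk jx kx pkj aut; apply: exchangeable_psi => // q [qx q01] pj pk.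
have q_le1 l : q l <= 1 by case/andP: (q01 l).
have [d0 _ _] := transfer_amount_range (q_le1 j) pk.
have sym : psi e x (upd2 q j k 1 0) = psi e x (upd2 q j k 0 1).
  by rewrite -(boolp.funext (upd2_tperm q 1 0 jk)) psi_perm // tpermD // eq_sym.
rewrite -[X in _ <= psi e x X](boolp.funext (upd2_id q j k)).
apply: avoid_sum_transfer_sym => //.
by have := q_le1 k; case: (transfer_amountE pstar q j k) => ->; lra.
Qed.

End ShapleyExchange.

Section StarLeaf.
Variables (R : realType) (n : nat) (x c : 'I_n) (p1 : R) (pstar : 'I_n -> R).
Hypothesis xc : x != c.
Implicit Types (q : 'I_n -> R) (k : 'I_n).

Let e := star_graph c.
Let leaf_term := @avoid_sum R _ _ predT (fun pi : {perm 'I_n} => preceding pi x :&: [set x; c]).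
Let center_term := @avoid_sum R _ _ predT (fun pi : {perm 'I_n} => preceding pi x).

Lemma psi_star_leaf q : psi e x q = leaf_term q + center_term q.
Proof.
have cnbhdE : cnbhd e [set x] = [set x; c].
  apply/setP => y; rewrite in_cnbhd1 !inE /e /star_graph (negbTE xc) eq_sym.
  by case: (eqVneq y x).
have domE : dominators e x = [set x; c].
  by apply/setP => y; rewrite !inE /e /star_graph (negbTE xc) orbF; case: eqVneq.
have domcE : dominators e c = setT.
  by apply/setP => y; rewrite !inE /e /star_graph eqxx orbT andbT; case: eqVneq.
rewrite psiE /leaf_term /center_term /avoid_sum -big_split; apply: eq_bigr => pi _ /=.
by rewrite cnbhdE big_setU1 ?inE // big_set1 domE domcE setIT.
Qed.

Lemma center_term_perm (tau : {perm 'I_n}) q : tau x = x -> center_term (q \o tau) = center_term q.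
Proof.
move=> tx; apply: (@avoid_sum_perm _ _ _ _ _ (fun pi => (tau^-1 * pi)%g)) => //.
  exact: mulgI.
by move=> pi l; rewrite !inE !permM permK -{1}tx permK.
Qed.

Lemma star_leaf_part_le k q : k != x -> k != c -> (forall l, 0 <= q l <= 1) ->
  avoid_part predT (fun pi => preceding pi x) c k true true q <=
  avoid_part predT (fun pi => preceding pi x :&: [set x; c]) c k true false q.
Proof.
move=> kx kc q01; apply: ler_sum => pi _.
have -> : preceding pi x :&: [set x; c] :\ c :\ k = set0.
  apply/setP => l; rewrite !inE; case: (eqVneq l x) => [->|_]; first by rewrite ltnn !andbF.
  by case: (eqVneq l c); rewrite ?andbF.
have kNA : (k \in preceding pi x :&: [set x; c]) = false.
  by rewrite !inE (negbTE kx) (negbTE kc) andbF.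
have cA : (c \in preceding pi x :&: [set x; c]) = (c \in preceding pi x).
  by rewrite !inE eqxx orbT andbT.
rewrite big_set0 kNA cA /=.
case: (c \in preceding pi x) => //=; case: (k \in preceding pi x) => //=.
by apply: prodr_ile1 => l _; have /andP[? ?] := q01 l; apply/andP; split; lra.
Qed.

Lemma Sh_NC1_exchangeable_star_center k : k != x -> k != c ->
  exchangeable x p1 pstar (fun q => Sh_NC1 e q x) c k.
Proof.
move=> kx kc; have ck : c != k by rewrite eq_sym.
have cx : c != x by rewrite eq_sym.
apply: (exchangeable_psi cx kx) => q [qx q01] pc pk.
have [d0 _ _] := transfer_amount_range (proj2 (andP (q01 c))) pk.
rewrite -[X in _ <= psi e x X](boolp.funext (upd2_id q c k)) !psi_star_leaf -subr_le0.
have kN pi : predT pi -> k \notin preceding pi x :&: [set x; c].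
  by rewrite !inE (negbTE kx) (negbTE kc) andbF.
rewrite opprD addrACA !avoid_sum_transfer //.
rewrite (avoid_part_notin c false q kN) (avoid_part_notin c true q kN).
have sym : center_term (upd2 q c k 1 0) = center_term (upd2 q c k 0 1).
  by rewrite -(boolp.funext (upd2_tperm q 1 0 ck)) center_term_perm // tpermD // eq_sym.
rewrite (avoid_part_swap ck sym) mul0r addr0 sub0r subrr add0r -mulrDr.
apply: mulr_ge0_le0 => //; have := star_leaf_part_le kx kc q01.
have : 0 <= avoid_part predT (fun pi => preceding pi x) c k true true q.
  by apply: avoid_part_ge0 => l; case/andP: (q01 l).
have := q01 k; have := q01 c; nra.
Qed.

End StarLeaf.

Lemma complete_graph_perm n (tau : {perm 'I_n}) a b :
  complete_graph (tau a) (tau b) = complete_graph a b.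
Proof. by rewrite /complete_graph (inj_eq perm_inj). Qed.

Lemma star_graph_perm n (c : 'I_n) (tau : {perm 'I_n}) a b : tau c = c ->
  star_graph c (tau a) (tau b) = star_graph c a b.
Proof. by move=> tc; rewrite /star_graph (inj_eq perm_inj) -{1 2}tc !(inj_eq perm_inj). Qed.

Lemma optimal_attack_greedy (R : realType) n (e : rel 'I_n) x p1 pstar (L Rs B : R) s :
  0 <= p1 <= 1 -> (forall l, l != x -> 0 <= pstar l <= 1) -> 0 < L -> 0 < Rs -> 0 <= B ->
  perm_eq s [seq j <- enum 'I_n | j != x] ->
  exchange_ordered x p1 pstar (fun q => Sh_NC1 e q x) s ->
  optimal_attack e x p1 pstar L Rs B (greedy_profile x p1 pstar Rs B s).
Proof.
move=> p1_range pstar_range L0 Rs0 B0 s_perm exs; split.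
  exact: greedy_profile_feasible.
move=> q; apply: (greedy_profile_optimal (Phi := fun q => Sh_NC1 e q x)) => //.
exact: Sh_NC1_mono.
Qed.

Lemma perm_eq_cons_filter (T : finType) (a : pred T) (c : T) (t : seq T) :
  a c -> perm_eq t [seq j <- enum T | a j && (j != c)] ->
  perm_eq (c :: t) [seq j <- enum T | a j].
Proof.
move=> ac t_perm; have mem_t l : (l \in t) = a l && (l != c).
  by rewrite (perm_mem t_perm) mem_filter mem_enum andbT.
have u_enum : uniq [seq j <- enum T | a j] by rewrite filter_uniq // enum_uniq.
apply: uniq_perm => //.
  by rewrite cons_uniq mem_t eqxx andbF (perm_uniq t_perm) filter_uniq // enum_uniq.
move=> l; rewrite inE mem_t mem_filter mem_enum andbT.
by case: (eqVneq l c) => [->|]; rewrite ?ac ?andbT.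
Qed.

Theorem theorem4 (R : realType) :
  (* (i): G = K_n or G = star with center 1 (our ord0); n = m.+1 >= 1 *)
  (forall (m : nat) (e : rel 'I_m.+1),
     (e = @complete_graph m.+1 \/ e = star_graph ord0) ->
   forall (pstar : 'I_m.+1 -> R) (p1 L Rs B : R),
     (forall j, j != ord0 -> 0 < pstar j <= 1) ->
     0 <= p1 <= 1 -> 0 < L -> 0 < Rs -> 0 <= B ->
   forall s : seq 'I_m.+1,
     perm_eq s [seq j <- enum 'I_m.+1 | j != ord0] ->
     sorted (fun a b => pstar b <= pstar a) s ->
     optimal_attack e ord0 p1 pstar L Rs B
       (greedy_profile ord0 p1 pstar Rs B s)) /\
  (* (ii): G = star with center 2 (our vtx2); n = m.+2 >= 2 *)
  (forall (m : nat) (pstar : 'I_m.+2 -> R) (p1 L Rs B : R),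
     (forall j, j != ord0 -> 0 < pstar j <= 1) ->
     0 <= p1 <= 1 -> 0 < L -> 0 < Rs -> 0 <= B ->
   forall t : seq 'I_m.+2,
     perm_eq t [seq j <- enum 'I_m.+2 | (j != ord0) && (j != vtx2 m)] ->
     sorted (fun a b => pstar b <= pstar a) t ->
     optimal_attack (star_graph (vtx2 m)) ord0 p1 pstar L Rs B
       (greedy_profile ord0 p1 pstar Rs B (vtx2 m :: t))).
Proof.
have pstar01 n (pstar : 'I_n.+1 -> R) : (forall j, j != ord0 -> 0 < pstar j <= 1) ->
    forall j, j != ord0 -> 0 <= pstar j <= 1.
  by move=> hp j /hp /andP[/ltW -> ->].
split.
- move=> m e e_graph pstar p1 L Rs B hp p1r L0 Rs0 B0 s s_perm s_sorted.
  apply: optimal_attack_greedy => //; first exact: pstar01.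
  apply: exchange_ordered_sorted => //; first exact: uniq_profile_seq s_perm.
  move=> j k /[!mem_profile_seq s_perm] j0 k0 jk kj.
  apply: Sh_NC1_exchangeable_sym => // a b.
  case: e_graph => ->; first exact: complete_graph_perm.
  by apply: star_graph_perm; rewrite tpermD // eq_sym.
- move=> m pstar p1 L Rs B hp p1r L0 Rs0 B0 t t_perm t_sorted; set c := vtx2 m.
  have mem_t l : (l \in t) = (l != ord0) && (l != c).
    by rewrite (perm_mem t_perm) mem_filter mem_enum andbT.
  apply: optimal_attack_greedy => //; first exact: pstar01.
    exact: (perm_eq_cons_filter (a := fun j => j != ord0)).
  split=> [k /[!mem_t] /andP[k0 kc]|].
    by apply: Sh_NC1_exchangeable_star_center; rewrite // eq_sym.
  apply: exchange_ordered_sorted => //.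
    by rewrite (perm_uniq t_perm) filter_uniq // enum_uniq.
  move=> j k /[!mem_t] /andP[j0 jc] /andP[k0 kc] jk kj.
  apply: Sh_NC1_exchangeable_sym => // a b.
  by apply: star_graph_perm; rewrite tpermD // eq_sym.
Qed.
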